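(* Let $G$ be a finite group, $\alpha\in\mathbb{Z}_{\ge0}$, and let $(A,M)$ be an irreducible NIM-rep of the near-group fusion ring $K(G,\alpha)$ whose basis is partitioned into $p$ $G$-orbits $O_1,\dots,O_p$, with $O_i\cong G/H_i$ as $G$-sets for subgroups $H_i\le G$. For $1\le i,j\le p$ let $c_{i,j}$ be the coefficient of $m'$ in $X\vartriangleright m$ for $m\in O_i$, $m'\in O_j$ (this is independent of the choice of $m,m'$). If $p=1$ then $\alpha=c_{1,1}[G:H_1]-|H_1|/c_{1,1}$. If $p\ge2$ then $\alpha=\sum_{j=1}^p\frac{c_{i,j}c_{j,q}}{c_{i,q}}[G:H_j]$ for any orbit labels $i\neq q$ with $c_{i,q}>0$.
   Context: The near-group fusion ring $K(G,\alpha)$ is the free $\mathbb{Z}$-module with basis $G\cup\{X\}$, with multiplication given by the group law on $G$, $gX=Xg=X$ for $g\in G$, and $X^2=\sum_{g\in G}g+\alpha X$; involution $g^*=g^{-1}$, $X^*=X$. A NIM-rep of a fusion ring $(R,B)$ is a nonzero left $R$-module $A$ which is a free $\mathbb{Z}$-module with a fixed basis $M$, such that each $b\vartriangleright m$ is a non-negative integer combination of elements of $M$, and $(b\vartriangleright m,m')=(m,b^*\vartriangleright m')$ for the form making $M$ orthonormal. The elements of $G$ permute $M$. A NIM-rep is irreducible if no proper nonempty subset of $M$ spans an $R$-submodule. *)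

From mathcomp Require Import all_boot all_order all_algebra all_fingroup.
Set Implicit Arguments. Unset Strict Implicit. Unset Printing Implicit Defensive.

(* Basis of the near-group fusion ring K(G,alpha): G is the whole finGroupType
   gT; the basis element g is [Some g] and X is [None]. *)
Definition ng_basis (gT : finGroupType) := option gT.

(* Structure constants: ng_N alpha a b c = coefficient of c in a*b. *)
Definition ng_N (gT : finGroupType) (alpha : nat) (a b c : option gT) : nat :=
  match a, b, c with
  | Some g, Some h, Some k => nat_of_bool (g * h == k)%g
  | Some _, Some _, None => 0
  | Some _, None, None => 1
  | None, Some _, None => 1
  | Some _, None, Some _ => 0
  | None, Some _, Some _ => 0
  | None, None, Some _ => 1
  | None, None, None => alpha
  end.

Definition ng_dual (gT : finGroupType) (a : option gT) : option gT :=
  match a with Some g => Some (g^-1)%g | None => None end.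

(* A NIM-rep with basis the finite type T is given by the matrices
   act b m m' = coefficient of m' in  b |> m  (non-negative integers). *)
Definition is_NIMrep (gT : finGroupType) (alpha : nat) (T : finType)
  (act : option gT -> T -> T -> nat) : Prop :=
  [/\ (0 < #|T|)%N,
      (forall m m', act (Some 1%g) m m' = nat_of_bool (m == m')),
      (* module axiom: b |> (c |> m) = (b c) |> m *)
      (forall b c m m'',
          (\sum_(m' : T) act c m m' * act b m' m'' =
           \sum_(d : option gT) ng_N alpha b c d * act d m m'')%N) &
      (forall b m m', act b m m' = act (ng_dual b) m' m)].

Definition is_irreducible_NIMrep (gT : finGroupType) (alpha : nat) (T : finType)
  (act : option gT -> T -> T -> nat) : Prop :=
  is_NIMrep alpha act /\
  forall S : {set T}, S != set0 -> S != setT ->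
    exists b m m', [/\ m \in S, m' \notin S & (0 < act b m m')%N].

Definition ng_orbit (gT : finGroupType) (T : finType)
  (act : option gT -> T -> T -> nat) (m : T) : {set T} :=
  [set m' | [exists g : gT, act (Some g) m m' != 0%N]].

Definition ng_stab (gT : finGroupType) (T : finType)
  (act : option gT -> T -> T -> nat) (m : T) : {set gT} :=
  [set g : gT | act (Some g) m m != 0%N].

Definition ng_orbits (gT : finGroupType) (T : finType)
  (act : option gT -> T -> T -> nat) : {set {set T}} :=
  [set ng_orbit act m | m : T].

Definition orep (T : finType) (d : T) (O : {set T}) : T :=
  odflt d [pick x in O].

Definition ng_index (gT : finGroupType) (T : finType)
  (act : option gT -> T -> T -> nat) (m : T) : nat :=
  #|[set: gT] : ng_stab act m|%g.

From mathcomp Require Import all_boot all_order all_algebra all_fingroup.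
From mathcomp Require Import ring.
Import GRing.Theory Num.Theory.

Set Implicit Arguments.
Unset Strict Implicit.
Unset Printing Implicit Defensive.

(* Since g^-1 g = 1 and the action is adjoint, each row of the matrix of g in G
   has squared norm 1, so G permutes the basis and the G-orbits and stabilisers
   are those of a genuine group action.  X commutes with G, so its matrix
   entries only depend on the orbits.  Reading off the (m, m') entry of
   X^2 = sum_g g + alpha X and grouping the intermediate basis elements by orbit
   gives  sum_j [G : H_j] c_ij c_jq = #{g | g m = m'} + alpha c_iq,  where the
   count vanishes when m and m' lie in different orbits and is |H| when m = m'. *)

Lemma sum_option (I : finType) (F : option I -> nat) :
  (\sum_(o : option I) F o = F None + \sum_(i : I) F (Some i))%N.
Proof.
rewrite (bigD1 None) //=; congr (_ + _).
rewrite (reindex_omap Some id) //=; last by case.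
by apply: eq_bigl => i; rewrite eqxx.
Qed.

Lemma sum_nat_delta (I : finType) (i : I) (F : I -> nat) :
  (\sum_(j : I) (i == j) * F j = F i)%N.
Proof.
rewrite (bigD1 i) //= eqxx mul1n big1 ?addn0 // => j.
by rewrite eq_sym => /negbTE ->.
Qed.

Lemma sum_sqr_eq1 (I : finType) (f : I -> nat) :
  (\sum_(i : I) f i * f i = 1)%N -> exists i0, forall i, f i = (i0 == i).
Proof.
move=> /eqP /sum_nat_eq1 [i0 [_ /eqP + f0]].
rewrite muln_eq1 => /andP [/eqP f1 _].
exists i0 => i; case: eqVneq => [<- | ne]; first by rewrite f1.
by apply/eqP; rewrite -[_ == 0]orbb -muln_eq0; apply/eqP/f0; rewrite // eq_sym.
Qed.

Section NIMrepAsGroupAction.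

Variables (gT : finGroupType) (alpha : nat) (T : finType).
Variable act : option gT -> T -> T -> nat.
Hypothesis nim : is_NIMrep alpha act.

Lemma sum_actg_sqr g m :
  (\sum_(m' : T) act (Some g) m m' * act (Some g) m m' = 1)%N.
Proof.
have [_ act1 actM actV] := nim.
have := actM (Some (g^-1)%g) (Some g) m m.
rewrite sum_option /= mul0n add0n.
rewrite sum_nat_delta mulVg act1 eqxx /= => <-.
by apply: eq_bigr => m' _; rewrite [act _ m' m]actV /= invgK.
Qed.

Definition gact (g : gT) (m : T) : T :=
  odflt m [pick m' | act (Some g) m m' != 0%N].

Lemma actgE g m m' : act (Some g) m m' = (gact g m == m').
Proof.
have [m0 actm0] := sum_sqr_eq1 (sum_actg_sqr g m).
rewrite /gact; case: pickP => [x | none] /=.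
  by rewrite !actm0; case: (eqVneq m0 x) => [-> | _].
by have := none m0; rewrite actm0 eqxx.
Qed.

Lemma actg_neq0 g m m' : (act (Some g) m m' != 0%N) = (gact g m == m').
Proof. by rewrite actgE; case: (gact g m == m'). Qed.

Lemma gact1 m : gact 1 m = m.
Proof.
have [_ act1 _ _] := nim.
by have := act1 m m; rewrite actgE eqxx; case: eqP.
Qed.

Lemma gactM g h m : gact g (gact h m) = gact (g * h) m.
Proof.
have [_ _ actM _] := nim.
have := actM (Some g) (Some h) m (gact (g * h) m).
rewrite sum_option /= mul0n add0n sum_nat_delta.
under eq_bigr do rewrite actgE.
by rewrite sum_nat_delta !actgE eqxx; case: eqP.
Qed.

Lemma actX_gactl g m m' : act None (gact g m) m' = act None m m'.
Proof.
have [_ _ actM _] := nim.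
have := actM None (Some g) m m'.
rewrite sum_option /= mul1n [X in _ + X]big1 => [|h _]; last exact: mul0n.
rewrite addn0 => <-.
by under eq_bigr do rewrite actgE; rewrite sum_nat_delta.
Qed.

Lemma actX_gactr g m m' : act None m (gact g m') = act None m m'.
Proof. by have [_ _ _ actV] := nim; rewrite actV [RHS]actV /= actX_gactl. Qed.

Lemma sum_actX_sqr m m' :
  (\sum_(x : T) act None m x * act None x m' =
   \sum_(g : gT) act (Some g) m m' + alpha * act None m m')%N.
Proof.
have [_ _ actM _] := nim.
by rewrite actM sum_option addnC; under eq_bigr do rewrite /= mul1n.
Qed.

(* MathComp actions are right actions. *)
Definition gact_right (m : T) (g : gT) : T := gact (g^-1)%g m.

Lemma gact_right1 : gact_right^~ 1%g =1 id.
Proof. by move=> m; rewrite /gact_right invg1 gact1. Qed.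

Lemma gact_rightM m : act_morph gact_right m.
Proof. by move=> g h; rewrite /gact_right gactM invMg. Qed.

Definition nim_action := TotalAction gact_right1 gact_rightM.

Lemma ng_orbitE m : ng_orbit act m = orbit nim_action [set: gT] m.
Proof.
apply/setP => x; rewrite inE; apply/existsP/orbitP => [[g] | [g _ <-]].
  rewrite actg_neq0 => /eqP <-; exists (g^-1)%g; first exact: in_setT.
  by rewrite /= /gact_right invgK.
by exists (g^-1)%g; rewrite actg_neq0.
Qed.

Lemma ng_stabE m : ng_stab act m = ('C_[set: gT][m | nim_action])%g.
Proof.
have [_ _ _ actV] := nim.
apply/setP => g; rewrite inE in_setI in_setT actV /= actg_neq0.
by apply/eqP/astab1P.
Qed.

Lemma ng_indexE m : ng_index act m = #|ng_orbit act m|.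
Proof. by rewrite /ng_index ng_stabE ng_orbitE card_orbit. Qed.

Lemma ng_orbit_refl m : m \in ng_orbit act m.
Proof. by rewrite ng_orbitE orbit_refl. Qed.

Lemma ng_orbit_eqE x y :
  (ng_orbit act x == ng_orbit act y) = (x \in ng_orbit act y).
Proof. by rewrite !ng_orbitE; apply/eqP/orbit_eqP. Qed.

Lemma actX_orbitl m x y : x \in ng_orbit act m -> act None x y = act None m y.
Proof. by rewrite ng_orbitE => /orbitP [g _ <-]; rewrite actX_gactl. Qed.

Lemma actX_orbitr m x y : x \in ng_orbit act m -> act None y x = act None y m.
Proof. by rewrite ng_orbitE => /orbitP [g _ <-]; rewrite actX_gactr. Qed.

Lemma sum_actg_stab m :
  (\sum_(g : gT) act (Some g) m m)%N = #|ng_stab act m|.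
Proof.
rewrite -sum1_card [RHS]big_mkcond; apply: eq_bigr => g _.
by rewrite inE actg_neq0 actgE; case: eqP.
Qed.

Lemma sum_actg_notin_orbit m m' :
  m' \notin ng_orbit act m -> (\sum_(g : gT) act (Some g) m m')%N = 0%N.
Proof.
move=> m'N; apply: big1 => g _; rewrite actgE; case: eqP => // gm.
by case/negP: m'N; rewrite inE; apply/existsP; exists g; rewrite actg_neq0 gm.
Qed.

Lemma card_ng_stab_gt0 m : (0 < #|ng_stab act m|)%N.
Proof. by apply/card_gt0P; exists 1%g; rewrite inE actg_neq0 gact1. Qed.

Lemma ng_orbit_setT m : #|ng_orbits act| = 1%N -> ng_orbit act m = [set: T].
Proof.
move=> /eqP /cards1P [O orbitsO].
apply/setP => x; rewrite in_setT -ng_orbit_eqE.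
have orbit_in y : ng_orbit act y \in ng_orbits act by apply: imset_f.
move: (orbit_in x) (orbit_in m); rewrite orbitsO !inE.
by move=> /eqP -> /eqP ->; rewrite eqxx.
Qed.

Lemma orep_orbit d O : O \in ng_orbits act -> ng_orbit act (orep d O) = O.
Proof.
case/imsetP => y _ ->; apply/eqP; rewrite ng_orbit_eqE /orep.
by case: pickP => [x // | none]; have := none y; rewrite ng_orbit_refl.
Qed.

Lemma sum_by_orbits d (F : T -> nat) :
    (forall m x, x \in ng_orbit act m -> F x = F m) ->
  (\sum_(x : T) F x =
   \sum_(O in ng_orbits act) ng_index act (orep d O) * F (orep d O))%N.
Proof.
move=> Finv; rewrite (partition_big_imset (ng_orbit act)) /=.
apply: eq_bigr => O /(orep_orbit d) orbitO.
rewrite ng_indexE orbitO -sum_nat_const; apply: eq_big => [x | x].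
  by rewrite -[in LHS]orbitO ng_orbit_eqE orbitO.
by move=> /eqP xO; apply: Finv; rewrite orbitO -xO ng_orbit_refl.
Qed.

Lemma actX_sqr_transitive m : ng_orbit act m = [set: T] ->
  (ng_index act m * (act None m m * act None m m) =
   #|ng_stab act m| + alpha * act None m m)%N.
Proof.
move=> orbitT; rewrite -sum_actg_stab -sum_actX_sqr ng_indexE orbitT cardsT.
rewrite -sum_nat_const; apply/esym/eq_big => // x _.
have xm : x \in ng_orbit act m by rewrite orbitT inE.
by rewrite (actX_orbitr _ xm) (actX_orbitl _ xm).
Qed.

Lemma sum_orbits_actX_sqr m m' : m' \notin ng_orbit act m ->
  (\sum_(O in ng_orbits act) ng_index act (orep m O) *
     (act None m (orep m O) * act None (orep m O) m') =
   alpha * act None m m')%N.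
Proof.
move=> m'N.
rewrite -(@sum_by_orbits m (fun x => act None m x * act None x m'))
  => [|y x xy].
  by rewrite sum_actX_sqr sum_actg_notin_orbit.
by rewrite (actX_orbitr _ xy) (actX_orbitl _ xy).
Qed.

End NIMrepAsGroupAction.

Local Open Scope ring_scope.

Theorem corollary3p21 (gT : finGroupType) (alpha : nat) (T : finType)
  (act : option gT -> T -> T -> nat) :
  is_irreducible_NIMrep alpha act ->
  (* p = 1 *)
  (#|ng_orbits act| = 1%N ->
     forall m : T,
       let c := (act None m m)%:R : rat in
       alpha%:R = c * (ng_index act m)%:R
                  - (#|ng_stab act m|)%:R / c) /\
  (* p >= 2 *)
  ((2 <= #|ng_orbits act|)%N ->
     forall mi mq : T,
       ng_orbit act mi != ng_orbit act mq ->
       (0 < act None mi mq)%N ->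
       alpha%:R =
         \sum_(O in ng_orbits act)
           ((act None mi (orep mi O))%:R * (act None (orep mi O) mq)%:R
              / (act None mi mq)%:R
              * (ng_index act (orep mi O))%:R : rat)).
Proof.
move=> [nim _]; split=> [one_orbit m c | _ mi mq orbit_neq c_gt0].
  have E := actX_sqr_transitive nim (ng_orbit_setT nim m one_orbit).
  have c_neq0 : c != 0.
    rewrite pnatr_eq0; apply: contraTneq (card_ng_stab_gt0 nim m) => c0.
    by move: E; rewrite c0 !muln0 addn0 => <-.
  have /(congr1 (fun n => n%:R : rat)) := E.
  rewrite /= natrD !natrM -/c => sqr_eq.
  have -> : #|ng_stab act m|%:R = (ng_index act m)%:R * (c * c) - alpha%:R * c.
    by rewrite sqr_eq addrK.
  by field.
have mqN : mq \notin ng_orbit act mi by rewrite -(ng_orbit_eqE nim) eq_sym.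
have /(congr1 (fun n => n%:R : rat)) := sum_orbits_actX_sqr nim mqN.
rewrite /= natr_sum natrM => sum_eq.
have c_neq0 : (act None mi mq)%:R != 0 :> rat by rewrite pnatr_eq0 -lt0n.
apply: (mulIf c_neq0); rewrite -sum_eq mulr_suml; apply: eq_bigr => O _.
by rewrite !natrM; field.
Qed.
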